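(* Let $\mathbb{A}$, its multiplication, the decomposition $A_3=C\oplus L$ and the complex $\mathbb{B}=\mathbb{B}(\mathbb{A},C)$ be as in the context, and suppose moreover that $\mathbb{A}$ is split exact (i.e. exact including at $A_0$, so $I=R$). Then $\mathbb{B}$ is split exact.
   Context: Let $R$ be a commutative Noetherian ring and let $p\ge 1$, $q\ge 3$ be integers. Let $\mathbb{A}\colon 0\to A_3\xrightarrow{d_3}A_2\xrightarrow{d_2}A_1\xrightarrow{d_1}A_0=R$ be a complex of finitely generated free $R$-modules with $\operatorname{rank}A_1=p+2$, $\operatorname{rank}A_2=p+q$, $\operatorname{rank}A_3=q-1$. Fix a differential graded algebra structure on $\mathbb{A}$: $R$-bilinear products $A_1\times A_1\to A_2$ (alternating: $e\cdot e=0$, $e\cdot e'=-e'\cdot e$) and $A_1\times A_2\to A_3$ satisfying the Leibniz rules $d_2(e\cdot e')=d_1(e)e'-d_1(e')e$ and $d_3(e\cdot f)=d_1(e)f+d_2(f)\cdot e$ for $e,e'\in A_1$, $f\in A_2$. Fix a decomposition $A_3=C\oplus L$ with $C$ free of rank $q-2$ and $L$ free of rank $1$; let $\eta\colon A_3\to L$ be the projection and $\iota\colon C\to A_3$ the inclusion. Define the sequence $\mathbb{B}=\mathbb{B}(\mathbb{A},C)\colon 0\to C\xrightarrow{\delta_4}A_2\xrightarrow{\delta_3}\operatorname{Hom}(A_1,L)\oplus A_1\xrightarrow{\delta_2}\operatorname{Hom}(A_2,L)\xrightarrow{\delta_1}\operatorname{Hom}(C,L)$ by $\delta_4=d_3\circ\iota$;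 $\delta_3(f)=\big(e\mapsto \eta(e\cdot f),\ d_2(f)\big)$; $\delta_2(\varphi,e)=\big(f\mapsto \varphi(d_2f)+\eta(e\cdot f)\big)$; $\delta_1(\psi)=\psi\circ d_3\circ\iota$. *)

From HB Require Import structures.
From mathcomp Require Import all_boot all_order all_algebra.
Set Implicit Arguments. Unset Strict Implicit. Unset Printing Implicit Defensive.
Import GRing.Theory.
Local Open Scope ring_scope.

Definition noetherian (R : comPzRingType) : Prop :=
  forall I : R -> Prop,
    I 0 -> (forall x y, I x -> I y -> I (x + y)) -> (forall r x, I x -> I (r * x)) ->
    exists n (g : 'I_n -> R), (forall i, I (g i)) /\
      (forall x, I x -> exists c : 'I_n -> R, x = \sum_(i < n) c i * g i).

Definition islin (R : pzRingType) (U V : lmodType R) (f : U -> V) : Prop :=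
  forall (a : R) (x y : U), f (a *: x + y) = a *: f x + f y.

Definition isbilin (R : pzRingType) (U V W : lmodType R) (m : U -> V -> W) : Prop :=
  (forall y, islin (fun x => m x y)) /\ (forall x, islin (m x)).

(* Free modules of rank n are modeled as row vectors 'rV[R]_n; an R-linear
   map A_n -> A_m is a matrix M : 'M_(n,m) acting by x |-> x *m M.
   L is free of rank one, modeled as 'rV[R]_1 (= R); Hom(A_n, L) is modeled
   as 'M[R]_(n,1), a homomorphism phi acting by x |-> x *m phi. *)
Definition app (R : pzRingType) n (phi : 'M[R]_(n, 1)) (x : 'rV[R]_n) : 'rV[R]_1 :=
  x *m phi.

Definition homOf (R : pzRingType) n (f : 'rV[R]_n -> 'rV[R]_1) : 'M[R]_(n, 1) :=
  \matrix_(i < n, j < 1) f (delta_mx 0 i) 0 j.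

(* Split exact complex 0 -> M3 -> M2 -> M1 -> M0 -> 0 : a complex with a
   (linear) contracting homotopy. *)
Definition split_exact4 (R : pzRingType) (M3 M2 M1 M0 : lmodType R)
  (f3 : M3 -> M2) (f2 : M2 -> M1) (f1 : M1 -> M0) : Prop :=
  [/\ islin f3, islin f2, islin f1,
      (forall x, f2 (f3 x) = 0) /\ (forall x, f1 (f2 x) = 0) &
  exists (s0 : M0 -> M1) (s1 : M1 -> M2) (s2 : M2 -> M3),
    [/\ islin s0 /\ islin s1 /\ islin s2,
        (forall x, s2 (f3 x) = x),
        (forall x, f3 (s2 x) + s1 (f2 x) = x),
        (forall x, f2 (s1 x) + s0 (f1 x) = x) &
        (forall x, f1 (s0 x) = x)]].

Definition split_exact5 (R : pzRingType) (M4 M3 M2 M1 M0 : lmodType R)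
  (f4 : M4 -> M3) (f3 : M3 -> M2) (f2 : M2 -> M1) (f1 : M1 -> M0) : Prop :=
  [/\ islin f4 /\ islin f3 /\ islin f2 /\ islin f1,
      (forall x, f3 (f4 x) = 0), (forall x, f2 (f3 x) = 0), (forall x, f1 (f2 x) = 0) &
  exists (s0 : M0 -> M1) (s1 : M1 -> M2) (s2 : M2 -> M3) (s3 : M3 -> M4),
    [/\ islin s0 /\ islin s1 /\ islin s2 /\ islin s3,
        (forall x, s3 (f4 x) = x) /\ (forall x, f4 (s3 x) + s2 (f3 x) = x),
        (forall x, f3 (s2 x) + s1 (f2 x) = x),
        (forall x, f2 (s1 x) + s0 (f1 x) = x) &
        (forall x, f1 (s0 x) = x)]].

(* The maps of B(A, C).  Here eta : 'M_(q-1,1) is the projection A3 -> L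
   and iota : 'M_(q-2,q-1) the inclusion C -> A3. *)
Section BDef.
Variables (R : comPzRingType) (n1 n2 n3 nC : nat).
Variables (d3 : 'M[R]_(n3, n2)) (d2 : 'M[R]_(n2, n1)).
Variable (mul12 : 'rV[R]_n1 -> 'rV[R]_n2 -> 'rV[R]_n3).
Variables (iota : 'M[R]_(nC, n3)) (eta : 'M[R]_(n3, 1)).

Definition delta4 (c : 'rV[R]_nC) : 'rV[R]_n2 := c *m iota *m d3.

Definition delta3 (f : 'rV[R]_n2) : 'M[R]_(n1, 1) * 'rV[R]_n1 :=
  (homOf (fun e => mul12 e f *m eta), f *m d2).

Definition delta2 (pe : 'M[R]_(n1, 1) * 'rV[R]_n1) : 'M[R]_(n2, 1) :=
  homOf (fun f => app pe.1 (f *m d2) + mul12 pe.2 f *m eta).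

Definition delta1 (psi : 'M[R]_(n2, 1)) : 'M[R]_(nC, 1) :=
  homOf (fun c => app psi (c *m iota *m d3)).
End BDef.

From HB Require Import structures.
From mathcomp Require Import all_boot all_order all_algebra.
From mathcomp Require Import ring.
Set Implicit Arguments. Unset Strict Implicit.
Import GRing.Theory.
Local Open Scope ring_scope.

(* Since [A] is split exact, some [u] in [A1] has [d1 u = 1] and [d3] is
   injective.  The Leibniz rules then say that left multiplication by [u] is a
   contracting homotopy of [A], and that [A1] acts on the boundaries [d3 A3]
   through [d1].  Combining multiplication by [u] with the projection [piC] of
   [A3] onto [C] and the boundary [d3 jL] of the generator of [L] gives an
   explicit contracting homotopy of [B]. *)

Section LinearMaps.
Variables (R : pzRingType) (U V : lmodType R) (f : U -> V).
Hypothesis lin_f : islin f.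

Lemma islin0 : f 0 = 0.
Proof. by have := lin_f (-1) 0 0; rewrite scaler0 add0r scaleN1r addNr. Qed.

Lemma islinD x y : f (x + y) = f x + f y.
Proof. by have := lin_f 1 x y; rewrite !scale1r. Qed.

Lemma islinZ a x : f (a *: x) = a *: f x.
Proof. by have := lin_f a x 0; rewrite !addr0 islin0 addr0. Qed.

Lemma islinB x y : f (x - y) = f x - f y.
Proof. by have := lin_f (-1) y x; rewrite !scaleN1r !(addrC (- _)). Qed.

End LinearMaps.

Section HomToRankOne.
Variables (R : comPzRingType) (n : nat).

Lemma mul_homOf (f : 'rV[R]_n -> 'rV[R]_1) : islin f -> forall x, x *m homOf f = f x.
Proof.
move=> lin_f x; rewrite {2}(row_sum_delta x).
rewrite (big_morph f (islinD lin_f) (islin0 lin_f)).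
apply/matrixP => i k; rewrite (ord1 i) (ord1 k) !mxE summxE; apply: eq_bigr => j _.
by rewrite (islinZ lin_f) !mxE.
Qed.

Lemma hom_ext (A B : 'M[R]_(n, 1)) : (forall x : 'rV_n, x *m A = x *m B) -> A = B.
Proof. by move=> eqAB; apply/row_matrixP => i; rewrite !rowE. Qed.

Lemma homOf0 (f : 'rV[R]_n -> 'rV[R]_1) : (forall x, f x = 0) -> homOf f = 0.
Proof. by move=> f0; apply/matrixP => i j; rewrite !mxE f0 mxE. Qed.

Lemma islin_homOf (U : lmodType R) (F : U -> 'rV[R]_n -> 'rV[R]_1) :
  (forall y, islin (F ^~ y)) -> islin (fun x => homOf (F x)).
Proof. by move=> linF a x z; apply/matrixP => i j; rewrite !mxE linF !mxE. Qed.

End HomToRankOne.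

Lemma mx11_mulmx (R : comPzRingType) n (a : 'M[R]_1) (M : 'M[R]_(1, n)) :
  a *m M = a 0 0 *: M.
Proof. by rewrite {1}[a]mx11_scalar mul_scalar_mx. Qed.

Section ComplexB.
Variables (R : comPzRingType) (n1 n2 n3 : nat).
Variables (d3 : 'M[R]_(n3, n2)) (d2 : 'M[R]_(n2, n1)) (d1 : 'M[R]_(n1, 1)).
Variables (mul11 : 'rV[R]_n1 -> 'rV[R]_n1 -> 'rV[R]_n2)
          (mul12 : 'rV[R]_n1 -> 'rV[R]_n2 -> 'rV[R]_n3).
Hypotheses (d3d2 : d3 *m d2 = 0) (d2d1 : d2 *m d1 = 0).
Hypotheses (bilin11 : isbilin mul11) (bilin12 : isbilin mul12).
Hypothesis mul11C : forall e e', mul11 e e' = - mul11 e' e.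
Hypothesis leibniz11 :
  forall e e', mul11 e e' *m d2 = (e *m d1) 0 0 *: e' - (e' *m d1) 0 0 *: e.
Hypothesis leibniz12 :
  forall e f, mul12 e f *m d3 = (e *m d1) 0 0 *: f + mul11 (f *m d2) e.
Hypothesis d3_inj : injective (fun x : 'rV_n3 => x *m d3).

Lemma mul12_d3 e x : mul12 e (x *m d3) = (e *m d1) 0 0 *: x.
Proof.
apply: d3_inj; rewrite /= leibniz12 -mulmxA d3d2 mulmx0.
by rewrite (islin0 (bilin11.1 e)) addr0 scalemxAl.
Qed.

Lemma mul12_d2C f g : mul12 (f *m d2) g = - mul12 (g *m d2) f.
Proof.
apply: d3_inj; rewrite /= mulNmx !leibniz12 -!mulmxA d2d1 !mulmx0.
by rewrite !mxE !scale0r !add0r mul11C.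
Qed.

Variable u : 'rV[R]_n1.
Hypothesis d1u : (u *m d1) 0 0 = 1.

Lemma mul11u_d2 e : mul11 u e *m d2 = e - (e *m d1) 0 0 *: u.
Proof. by rewrite leibniz11 d1u scale1r. Qed.

Lemma mul12u_homotopy f : mul12 u f *m d3 + mul11 u (f *m d2) = f.
Proof. by rewrite leibniz12 d1u scale1r (mul11C (f *m d2)) addrNK. Qed.

Lemma mul12_mul11uC e e' : mul12 e (mul11 u e') = - mul12 e' (mul11 u e).
Proof.
apply: d3_inj; rewrite /= mulNmx !leibniz12 !mul11u_d2.
rewrite !(islinB (bilin11.1 _)) !(islinZ (bilin11.1 _)) (mul11C e e').
by apply/matrixP => i j; rewrite !mxE; ring.
Qed.

Variable nC : nat.
Variables (iota : 'M[R]_(nC, n3)) (jL : 'M[R]_(1, n3))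
          (piC : 'M[R]_(n3, nC)) (eta : 'M[R]_(n3, 1)).
Hypotheses (iota_piC : iota *m piC = 1%:M) (jL_eta : jL *m eta = 1%:M)
           (iota_eta : iota *m eta = 0).
Hypothesis piC_iota_eta_jL : piC *m iota + eta *m jL = 1%:M.

Lemma mulmx_piC_iota_eta_jL (x : 'rV_n3) : x *m piC *m iota + x *m eta *m jL = x.
Proof. by rewrite -!mulmxA -mulmxDr piC_iota_eta_jL mulmx1. Qed.

Local Notation dB4 := (delta4 d3 iota).
Local Notation dB3 := (delta3 d2 mul12 eta).
Local Notation dB2 := (delta2 d2 mul12 eta).
Local Notation dB1 := (delta1 d3 iota).

Lemma islin_delta4 : islin dB4.
Proof. by move=> a x y; rewrite /delta4 !mulmxDl !scalemxAl. Qed.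

Lemma islin_delta3 : islin dB3.
Proof.
move=> a x y; rewrite /delta3 (islin_homOf (F := fun f e => mul12 e f *m eta)).
  by rewrite mulmxDl -scalemxAl.
by move=> e b z w; rewrite (bilin12.2 e) mulmxDl scalemxAl.
Qed.

Lemma islin_delta2 : islin dB2.
Proof.
apply: (islin_homOf (F := fun pe f => app pe.1 (f *m d2) + mul12 pe.2 f *m eta)).
move=> f b z w /=; rewrite /app (bilin12.1 f) !mulmxDl mulmxDr -!scalemxAl.
by rewrite scalerDr -scalemxAr addrACA.
Qed.

Lemma islin_delta1 : islin dB1.
Proof.
apply: (islin_homOf (F := fun psi c => app psi (c *m iota *m d3))).
by move=> c b z w; rewrite /app mulmxDr scalemxAr.
Qed.

Lemma mul_delta3 f e : e *m (dB3 f).1 = mul12 e f *m eta.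
Proof. by rewrite mul_homOf // => a x y; rewrite (bilin12.1 f) mulmxDl scalemxAl. Qed.

Lemma mul_delta2 pe f : f *m dB2 pe = f *m d2 *m pe.1 + mul12 pe.2 f *m eta.
Proof.
rewrite mul_homOf // => a x y; rewrite /app (bilin12.2 pe.2) !mulmxDl -!scalemxAl.
by rewrite scalerDr addrACA.
Qed.

Lemma mul_delta1 (psi : 'M_(n2, 1)) (c : 'rV_nC) :
  c *m dB1 psi = c *m iota *m d3 *m psi.
Proof. by rewrite mul_homOf // => a x y; rewrite /app !mulmxDl !scalemxAl. Qed.

Lemma delta3_delta4 c : dB3 (dB4 c) = 0.
Proof.
rewrite /delta3 /delta4 -(mulmxA _ d3) d3d2 mulmx0 homOf0 // => e.
by rewrite mul12_d3 -scalemxAl -mulmxA iota_eta mulmx0 scaler0.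
Qed.

Lemma delta2_delta3 f : dB2 (dB3 f) = 0.
Proof.
apply: hom_ext => g; rewrite mul_delta2 mul_delta3 mul12_d2C mulNmx addNr.
by rewrite mulmx0.
Qed.

Lemma delta1_delta2 pe : dB1 (dB2 pe) = 0.
Proof.
apply: hom_ext => c; rewrite mul_delta1 mul_delta2 -(mulmxA _ d3 d2) d3d2 !mulmx0 mul0mx.
by rewrite add0r mul12_d3 -scalemxAl -mulmxA iota_eta mulmx0 scaler0.
Qed.

Definition contrB3 (f : 'rV[R]_n2) : 'rV[R]_nC := mul12 u f *m piC.

Definition contrB2 (pe : 'M[R]_(n1, 1) * 'rV[R]_n1) : 'rV[R]_n2 :=
  mul11 u pe.2 + (u *m pe.1) 0 0 *: (jL *m d3).

Definition contrB1 (psi : 'M[R]_(n2, 1)) : 'M[R]_(n1, 1) * 'rV[R]_n1 :=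
  (homOf (fun e => mul11 u e *m psi), (jL *m d3 *m psi) 0 0 *: u).

Definition contrB0 (chi : 'M[R]_(nC, 1)) : 'M[R]_(n2, 1) :=
  homOf (fun f => mul12 u f *m piC *m chi).

Lemma mul_contrB1 psi e : e *m (contrB1 psi).1 = mul11 u e *m psi.
Proof. by rewrite mul_homOf // => a x y; rewrite (bilin11.2 u) !mulmxDl !scalemxAl. Qed.

Lemma mul_contrB0 chi f : f *m contrB0 chi = mul12 u f *m piC *m chi.
Proof. by rewrite mul_homOf // => a x y; rewrite (bilin12.2 u) !mulmxDl !scalemxAl. Qed.

Lemma islin_contrB3 : islin contrB3.
Proof. by move=> a x y; rewrite /contrB3 (bilin12.2 u) mulmxDl scalemxAl. Qed.

Lemma islin_contrB2 : islin contrB2.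
Proof.
move=> a [x1 x2] [y1 y2]; rewrite /contrB2 /= (bilin11.2 u) mulmxDr -scalemxAr.
by apply/matrixP => i j; rewrite !mxE; ring.
Qed.

Lemma islin_contrB1 : islin contrB1.
Proof.
move=> a x y; rewrite /contrB1 (islin_homOf (F := fun psi e => mul11 u e *m psi)).
  by congr pair; rewrite /= mulmxDr -scalemxAr !mxE scalerDl scalerA.
by move=> e b z w; rewrite mulmxDr scalemxAr.
Qed.

Lemma islin_contrB0 : islin contrB0.
Proof.
apply: (islin_homOf (F := fun chi f => mul12 u f *m piC *m chi)).
by move=> f b z w; rewrite mulmxDr scalemxAr.
Qed.

Lemma contrB3_delta4 c : contrB3 (dB4 c) = c.
Proof. by rewrite /contrB3 /delta4 mul12_d3 d1u scale1r -mulmxA iota_piC mulmx1. Qed.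

Lemma delta4_contrB3 f : dB4 (contrB3 f) + contrB2 (dB3 f) = f.
Proof.
rewrite /delta4 /contrB3 /contrB2 /= mul_delta3 -[RHS]mul12u_homotopy addrCA addrC.
congr (_ + _); rewrite -mx11_mulmx !mulmxA -mulmxDl.
by rewrite mulmx_piC_iota_eta_jL.
Qed.

Lemma delta3_contrB2 pe : dB3 (contrB2 pe) + contrB1 (dB2 pe) = pe.
Proof.
case: pe => phi e; congr pair => /=.
- apply: hom_ext => x; rewrite mulmxDr mul_delta3 mul_contrB1 mul_delta2 /contrB2 /=.
  rewrite (islinD (bilin12.2 x)) (islinZ (bilin12.2 x)) mul12_d3 mul12_mul11uC.
  rewrite mul11u_d2 !mulmxDl !mulNmx -!scalemxAl jL_eta.
  by apply/matrixP => i j; rewrite (ord1 i) (ord1 j) !mxE eqxx mulr1; ring.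
- rewrite mulmxDl mul11u_d2 -scalemxAl -(mulmxA jL) d3d2 mulmx0 scaler0 addr0.
  rewrite mul_delta2 -(mulmxA jL) d3d2 mulmx0 mul0mx add0r mul12_d3 -scalemxAl.
  by rewrite jL_eta !mxE /= mulr1 subrK.
Qed.

Lemma delta2_contrB1 psi : dB2 (contrB1 psi) + contrB0 (dB1 psi) = psi.
Proof.
apply: hom_ext => x; rewrite mulmxDr mul_delta2 mul_contrB1 mul_contrB0 mul_delta1 /=.
rewrite (islinZ (bilin12.1 x)) -scalemxAl.
rewrite -[in RHS](mul12u_homotopy x) -[in RHS](mulmx_piC_iota_eta_jL (mul12 u x)).
rewrite !mulmxDl -(mulmxA (mul12 u x *m eta) jL) -(mulmxA _ d3) mx11_mulmx.
rewrite -scalemxAl (mulmxA jL).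
by apply/matrixP => i j; rewrite (ord1 i) (ord1 j) !mxE; ring.
Qed.

Lemma delta1_contrB0 chi : dB1 (contrB0 chi) = chi.
Proof.
apply: hom_ext => c; rewrite mul_delta1 mul_contrB0 mul12_d3 d1u scale1r.
by rewrite -(mulmxA c) iota_piC mulmx1.
Qed.

End ComplexB.

Theorem mainTheorem3 (R : comPzRingType) (p q : nat)
  (d3 : 'M[R]_(q - 1, p + q)) (d2 : 'M[R]_(p + q, p.+2)) (d1 : 'M[R]_(p.+2, 1))
  (mul11 : 'rV[R]_(p.+2) -> 'rV[R]_(p.+2) -> 'rV[R]_(p + q))
  (mul12 : 'rV[R]_(p.+2) -> 'rV[R]_(p + q) -> 'rV[R]_(q - 1))
  (iota : 'M[R]_(q - 2, q - 1)) (jL : 'M[R]_(1, q - 1))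
  (piC : 'M[R]_(q - 1, q - 2)) (eta : 'M[R]_(q - 1, 1)) :
  noetherian R -> (1 <= p)%N -> (3 <= q)%N ->
  d3 *m d2 = 0 -> d2 *m d1 = 0 ->
  isbilin mul11 -> isbilin mul12 ->
  (forall e, mul11 e e = 0) -> (forall e e', mul11 e e' = - mul11 e' e) ->
  (forall e e', mul11 e e' *m d2 = (e *m d1) 0 0 *: e' - (e' *m d1) 0 0 *: e) ->
  (forall e f, mul12 e f *m d3 = (e *m d1) 0 0 *: f + mul11 (f *m d2) e) ->
  iota *m piC = 1%:M -> jL *m eta = 1%:M -> iota *m eta = 0 -> jL *m piC = 0 ->
  piC *m iota + eta *m jL = 1%:M ->
  split_exact4 (fun x : 'rV[R]_(q - 1) => x *m d3)
               (fun x : 'rV[R]_(p + q) => x *m d2)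
               (fun x : 'rV[R]_(p.+2) => x *m d1) ->
  split_exact5 (delta4 d3 iota) (delta3 d2 mul12 eta)
               (delta2 d2 mul12 eta) (delta1 d3 iota).
Proof.
move=> _ _ _ d3d2 d2d1 bilin11 bilin12 _ mul11C leibniz11 leibniz12
  iota_piC jL_eta iota_eta _ piC_iota_eta_jL
  [_ _ _ _ [s0 [_ [s2 [_ s2_d3 _ _ d1_s0]]]]].
have d3_inj : injective (fun x : 'rV_(q - 1) => x *m d3) := can_inj s2_d3.
set u := s0 1; have d1u : (u *m d1) 0 0 = 1 by rewrite d1_s0 mxE.
split.
- by do !split;
    [apply: islin_delta4 | apply: islin_delta3 | apply: islin_delta2 | apply: islin_delta1].
- move=> c; exact: (delta3_delta4 d3d2 bilin11 leibniz12 d3_inj iota_eta c).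
- move=> f; exact: (delta2_delta3 d2d1 bilin12 mul11C leibniz12 d3_inj eta f).
- move=> pe;
  exact: (delta1_delta2 d3d2 bilin11 bilin12 leibniz12 d3_inj iota_eta pe).
exists (contrB0 mul12 u piC), (contrB1 d3 mul11 u jL), (contrB2 d3 mul11 u jL),
  (contrB3 mul12 u piC); split.
- by do !split;
    [apply: islin_contrB0 | apply: islin_contrB1 | apply: islin_contrB2 | apply: islin_contrB3].
- split=> [c | f].
  + exact: (contrB3_delta4 d3d2 bilin11 leibniz12 d3_inj d1u iota_piC c).
  + exact: (delta4_contrB3 bilin12 mul11C leibniz12 d1u piC_iota_eta_jL f).
- move=> pe; exact: (delta3_contrB2 d3d2 bilin11 bilin12 mul11C leibniz11 leibniz12
                        d3_inj d1u jL_eta pe).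
- move=> psi;
  exact: (delta2_contrB1 bilin11 bilin12 mul11C leibniz12 d1u piC_iota_eta_jL psi).
- move=> chi;
  exact: (delta1_contrB0 d3d2 bilin11 bilin12 leibniz12 d3_inj d1u iota_piC chi).
Qed.
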